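(* Consider the discrete-time system $$x(t+1)=A\,Z(x(t))+B\,u(t)+w(t),\qquad Z(x)=\begin{bmatrix}x\\ S(x)\end{bmatrix}\in\mathbb{R}^{n+N},$$ with unknown $A=[A_1\ \ A_2]$ ($A_1\in\mathbb{R}^{n\times n}$, $A_2\in\mathbb{R}^{n\times N}$), unknown $B\in\mathbb{R}^{n\times m}$, known differentiable $S:\mathbb{R}^n\to\mathbb{R}^N$ with $S(0)=0$, and disturbances satisfying $\|w(t)\|\le h_w$ for all $t$. Let $A_s=\frac{\partial S}{\partial x}(0)$, $Q(x)=S(x)-A_sx$, $\bar A_1=A_1+A_2A_s$; assume $(\bar A_1,B)$ is stabilizable and $Q$ is Lipschitz on the safe set $\mathcal{S}(F,g)=\{x: Fx\le g\}$ ($F\in\mathbb{R}^{s\times n}$, $g\in\mathbb{R}^s$), which is a polyhedral C-set. Let data $U_0,X_0,X_1,V_0$ be collected from this system (under unknown disturbances $W_0$), with $V_0$ of full row rank and $T\ge n+N+1$. Let $\lambda\in(0,1]$ and $\mathcal{W}_W=\{W\in\mathbb{R}^{n\times T}:\|W\|\le Th_w\}$. For $x\in\mathbb{R}^n$, $W\in\mathbb{R}^{n\times T}$, $w\in\mathbb{R}^n$ and $G_K=[G_{K,1}\ G_{K,2}]$ define $$\delta=X_1G_{K,2}Q(x)-W\big(G_{K,1}x+G_{K,2}Q(x)\big)+w.$$ Suppose there exist $G_K\in\mathbb{R}^{T\times(n+N)}$ and $P_s\in\mathbb{R}^{s\times s}$ such that $$P_sg\le\lambda g-l^{dw},\qquad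 P_sF=FX_1G_{K,1},\qquad V_0G_K=I,\qquad P_s\ge0,$$ where $l^{dw}=[l^{dw}_1,\dots,l^{dw}_s]^T$ with $$l^{dw}_i=\min_{G_{K,2}}\ \max_{x:\,Fx\le g}\ \max_{W\in\mathcal{W}_W}\ \max_{\|w\|\le h_w}\ F_i\,\delta,\quad i=1,\dots,s,$$ and the matrix $G_{K,2}$ in $G_K$ attains each of these minima. Then, with $K_1=U_0G_{K,1}$ and $K_2=U_0G_{K,2}$, the safe set $\mathcal{S}(F,g)$ is $\lambda$-contractive (and hence robustly invariant) for the closed-loop system under the controller $u(t)=K_1x(t)+K_2Q(x(t))$.
   Context: $\|\cdot\|$ is the infinity norm for vectors and the induced infinity norm (maximum absolute row sum) for matrices. Data: inputs $u(0),\dots,u(T-1)$ applied, states $x(0),\dots,x(T)$ recorded, unmeasured disturbances $w(0),\dots,w(T-1)$; $U_0=[u(0)\cdots u(T-1)]$, $X_0=[x(0)\cdots x(T-1)]$, $X_1=[x(1)\cdots x(T)]$, $W_0=[w(0)\cdots w(T-1)]$, $V_0=\begin{bmatrix}X_0\\ Q(X_0)\end{bmatrix}$ with $Q(X_0)=[Q(x(0))\cdots Q(x(T-1))]$; $G_{K,1}\in\mathbb{R}^{T\times n}$, $G_{K,2}\in\mathbb{R}^{T\times N}$. $F_i$ is the $i$-th row of $F$. Inequalities are elementwise; $P_s\ge0$ means entrywise nonnegative. A polyhedral C-set is a compact convex polyhedron containing the origin in its interior. The set $\mathcal{P}=\{x:Fx\le g\}$ is $\lambda$-contractive if $x(t)\in\mathcal{P}$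 implies $x(t+1)\in\{x:Fx\le\lambda g\}$ for all $t$ and all disturbances with $\|w(t)\|\le h_w$; robustly invariant if $x(0)\in\mathcal{P}$ implies $x(t)\in\mathcal{P}$ for all $t\ge0$ and all such disturbances. *)

From HB Require Import structures.
From mathcomp Require Import all_boot all_order all_algebra.
From mathcomp Require Import all_classical all_reals all_analysis.
Set Implicit Arguments. Unset Strict Implicit. Unset Printing Implicit Defensive.
Import Order.TTheory GRing.Theory Num.Theory.
Import numFieldNormedType.Exports.
Local Open Scope classical_set_scope.
Local Open Scope ring_scope.

Section Defs.
Variable R : realType.

Definition mxle (p q : nat) (M1 M2 : 'M[R]_(p, q)) : Prop :=
  forall i j, M1 i j <= M2 i j.

Definition vnorm (k : nat) (v : 'cV[R]_k) : R := \big[Num.max/0]_(i < k) `|v i ord0|.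

Definition mnorm (p q : nat) (M : 'M[R]_(p, q)) : R :=
  \big[Num.max/0]_(i < p) \sum_(j < q) `|M i j|.

Definition safe_set (n s : nat) (F : 'M[R]_(s, n)) (g : 'cV[R]_s) : set 'cV[R]_n :=
  [set x | mxle (F *m x) g].

(* polyhedral C-set: compact convex polyhedron containing the origin in its
   interior ({x | F x <= g} is always a convex polyhedron) *)
Definition polyhedral_Cset (n s : nat) (F : 'M[R]_(s, n)) (g : 'cV[R]_s) : Prop :=
  compact (safe_set F g) /\ nbhs (0 : 'cV[R]_n) (safe_set F g).

Definition lipschitz_onS (n k : nat) (f : 'cV[R]_n -> 'cV[R]_k) (D : set 'cV[R]_n) : Prop :=
  exists L : R, forall x y, D x -> D y -> vnorm (f x - f y) <= L * vnorm (x - y).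

Definition stabilizable (n m : nat) (A : 'M[R]_n) (B : 'M[R]_(n, m)) : Prop :=
  exists K : 'M[R]_(m, n), (fun k : nat => (A + B *m K) ^+ k) @ \oo --> (0 : 'M[R]_n).

Definition datamx (k T : nat) (v : nat -> 'cV[R]_k) : 'M[R]_(k, T) :=
  \matrix_(i < k, j < T) v j i ord0.

Definition is_max (A : set R) (r : R) : Prop := A r /\ forall y, A y -> y <= r.
Definition is_min (A : set R) (r : R) : Prop := A r /\ forall y, A y -> r <= y.

Definition delta_term (n N T : nat) (X1 : 'M[R]_(n, T)) (G1 : 'M[R]_(T, n))
  (G2 : 'M[R]_(T, N)) (Q : 'cV[R]_n -> 'cV[R]_N) (x : 'cV[R]_n)
  (W : 'M[R]_(n, T)) (w : 'cV[R]_n) : 'cV[R]_n :=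
  X1 *m G2 *m Q x - W *m (G1 *m x + G2 *m Q x) + w.

Definition worst_vals (n N s T : nat) (F : 'M[R]_(s, n)) (g : 'cV[R]_s) (hw : R)
  (X1 : 'M[R]_(n, T)) (G1 : 'M[R]_(T, n)) (G2 : 'M[R]_(T, N))
  (Q : 'cV[R]_n -> 'cV[R]_N) (i : 'I_s) : set R :=
  [set r | exists x W w, safe_set F g x /\ mnorm W <= T%:R * hw /\ vnorm w <= hw /\
      r = (row i F *m delta_term X1 G1 G2 Q x W w) ord0 ord0].

Definition lam_contractive (n s : nat) (f : 'cV[R]_n -> 'cV[R]_n -> 'cV[R]_n)
  (F : 'M[R]_(s, n)) (g : 'cV[R]_s) (lam hw : R) : Prop :=
  forall x w, safe_set F g x -> vnorm w <= hw -> mxle (F *m f x w) (lam *: g).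

Definition robust_invariant (n s : nat) (f : 'cV[R]_n -> 'cV[R]_n -> 'cV[R]_n)
  (F : 'M[R]_(s, n)) (g : 'cV[R]_s) (hw : R) : Prop :=
  forall (xs ws : nat -> 'cV[R]_n),
    safe_set F g (xs 0%N) -> (forall t, vnorm (ws t) <= hw) ->
    (forall t, xs t.+1 = f (xs t) (ws t)) -> forall t, safe_set F g (xs t).

End Defs.

From HB Require Import structures.
From mathcomp Require Import all_boot all_order all_algebra.
From mathcomp Require Import all_classical all_reals all_analysis.
Set Implicit Arguments. Unset Strict Implicit. Unset Printing Implicit Defensive.
Import Order.TTheory GRing.Theory Num.Theory.
Import numFieldNormedType.Exports.
Local Open Scope classical_set_scope.
Local Open Scope ring_scope.

(* Since V0 GK = I, any vector z = G1 x + G2 Q(x) reproduces [x; Q(x)] through the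
   data, so the recorded trajectory gives A Z(x) + B U0 z = X1 z - W0 z.  Hence the
   closed loop is x+ = X1 G1 x + delta with W := W0, which lies in W_W.  Applying F,
   F X1 G1 x = Ps F x <= Ps g since Ps >= 0, and F delta <= l^dw, so F x+ <= lam g.
   Contractivity with lam <= 1 and g >= 0 (0 is in the safe set) gives invariance. *)

Section DataMatrices.
Variable R : realType.

Lemma eq_datamx k T (v v' : nat -> 'cV[R]_k) :
  (forall t, (t < T)%N -> v t = v' t) -> datamx T v = datamx T v'.
Proof. by move=> vv'; apply/matrixP=> i j; rewrite !mxE vv'. Qed.

Lemma datamxD k T (v v' : nat -> 'cV[R]_k) :
  datamx T (fun t => v t + v' t) = datamx T v + datamx T v'.
Proof. by apply/matrixP=> i j; rewrite !mxE. Qed.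

Lemma datamx_mulmx p k T (M : 'M[R]_(p, k)) (v : nat -> 'cV[R]_k) :
  datamx T (fun t => M *m v t) = M *m datamx T v.
Proof. by apply/matrixP=> i j; rewrite !mxE; apply: eq_bigr => l _; rewrite mxE. Qed.

Lemma datamx_col_mx k1 k2 T (a : nat -> 'cV[R]_k1) (b : nat -> 'cV[R]_k2) :
  datamx T (fun t => col_mx (a t) (b t)) = col_mx (datamx T a) (datamx T b).
Proof. by apply/matrixP=> i j; rewrite !mxE; case: splitP => l _; rewrite !mxE. Qed.

End DataMatrices.

Section Norms.
Variable R : realType.

Lemma vnorm_ge0 k (v : 'cV[R]_k) : 0 <= vnorm v.
Proof. by rewrite /vnorm; elim/big_ind: _ => // x y x_ge0 _; rewrite le_max x_ge0. Qed.

Lemma abs_le_vnorm k (v : 'cV[R]_k) i : `|v i ord0| <= vnorm v.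
Proof. by rewrite /vnorm (bigD1 i) //= le_max lexx. Qed.

Lemma mnorm_datamx_le k T (v : nat -> 'cV[R]_k) (h : R) :
  0 <= h -> (forall t, (t < T)%N -> vnorm (v t) <= h) ->
  mnorm (datamx T v) <= T%:R * h.
Proof.
move=> h_ge0 vh; rewrite /mnorm; elim/big_ind: _ => [||i _].
- by rewrite mulr_ge0.
- by move=> x y xh yh; rewrite ge_max xh.
apply: le_trans (_ : \sum_(j < T) h <= _).
  apply: ler_sum => j _; rewrite mxE.
  exact: le_trans (abs_le_vnorm (v j) i) (vh _ (ltn_ord j)).
by rewrite sumr_const card_ord mulr_natl.
Qed.

End Norms.

Section ClosedLoop.
Variables (R : realType) (n m N T : nat).
Variables (A : 'M[R]_(n, n + N)) (B : 'M[R]_(n, m)) (As : 'M[R]_(N, n)).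

Lemma datamx_system (S : 'cV[R]_n -> 'cV[R]_N) (ud : nat -> 'cV[R]_m)
    (xd wd : nat -> 'cV[R]_n) :
  (forall t, (t < T)%N ->
     xd t.+1 = A *m col_mx (xd t) (S (xd t)) + B *m ud t + wd t) ->
  datamx T (fun t => xd t.+1) =
    A *m col_mx (datamx T xd) (datamx T (fun t => S (xd t) - As *m xd t)
                               + As *m datamx T xd)
    + B *m datamx T ud + datamx T wd.
Proof.
move=> dyn; rewrite (eq_datamx dyn) !datamxD !datamx_mulmx datamx_col_mx.
congr (A *m col_mx _ _ + _ + _); rewrite -datamx_mulmx.
by apply/matrixP=> i j; rewrite !mxE subrK.
Qed.

Variables (U0 : 'M[R]_(m, T)) (X0 X1 W0 : 'M[R]_(n, T)) (Q0 : 'M[R]_(N, T)).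
Hypothesis data : X1 = A *m col_mx X0 (Q0 + As *m X0) + B *m U0 + W0.

Lemma closed_loop_data (x : 'cV[R]_n) (q : 'cV[R]_N) (z : 'cV[R]_T) :
  col_mx X0 Q0 *m z = col_mx x q ->
  A *m col_mx x (q + As *m x) + B *m (U0 *m z) = X1 *m z - W0 *m z.
Proof.
rewrite mul_col_mx => /eq_col_mx[X0z Q0z].
by rewrite data !mulmxDl -!mulmxA mul_col_mx mulmxDl -mulmxA X0z Q0z addrK.
Qed.

Lemma closed_loop_split (GK : 'M[R]_(T, n + N)) (x : 'cV[R]_n) (q : 'cV[R]_N)
    (w : 'cV[R]_n) :
  col_mx X0 Q0 *m GK = 1%:M ->
  A *m col_mx x (q + As *m x)
    + B *m (U0 *m lsubmx GK *m x + U0 *m rsubmx GK *m q) + w =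
  X1 *m lsubmx GK *m x
    + (X1 *m rsubmx GK *m q - W0 *m (lsubmx GK *m x + rsubmx GK *m q) + w).
Proof.
move=> V0GK; have z_data : col_mx X0 Q0 *m (GK *m col_mx x q) = col_mx x q.
  by rewrite mulmxA V0GK mul1mx.
rewrite -[GK]hsubmxK mul_row_col in z_data.
by rewrite -!mulmxA -mulmxDr closed_loop_data // mulmxDr !addrA.
Qed.

End ClosedLoop.

Section Contractivity.
Variables (R : realType) (n s : nat) (F : 'M[R]_(s, n)) (g : 'cV[R]_s).

Lemma safe_set_ge0 : safe_set F g 0 -> mxle 0 g.
Proof. by move=> g0 i j; move: (g0 i j); rewrite mulmx0. Qed.

Lemma Cset_ge0 : polyhedral_Cset F g -> mxle 0 g.
Proof. by case=> _ /nbhs_singleton; apply: safe_set_ge0. Qed.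

Lemma mxle_nonneg_mul2l (P : 'M[R]_s) (a b : 'cV[R]_s) :
  mxle 0 P -> mxle a b -> mxle (P *m a) (P *m b).
Proof.
move=> P_ge0 ab i j; rewrite !mxE; apply: ler_sum => k _.
by apply: ler_wpM2l; [move: (P_ge0 i k); rewrite mxE | exact: ab].
Qed.

Lemma contractive_of_linear_part (f : 'cV[R]_n -> 'cV[R]_n -> 'cV[R]_n)
    (M : 'M[R]_n) (d : 'cV[R]_n -> 'cV[R]_n -> 'cV[R]_n) (P : 'M[R]_s)
    (l : 'cV[R]_s) (lam hw : R) :
  (forall x w, f x w = M *m x + d x w) ->
  P *m F = F *m M -> mxle 0 P -> mxle (P *m g) (lam *: g - l) ->
  (forall x w, safe_set F g x -> vnorm w <= hw -> mxle (F *m d x w) l) ->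
  lam_contractive f F g lam hw.
Proof.
move=> f_split PF P_ge0 Pg d_le x w x_safe w_le i j.
rewrite f_split mulmxDr mulmxA -PF -mulmxA mxE.
apply: le_trans (lerD (mxle_nonneg_mul2l P_ge0 x_safe i j) (d_le x w x_safe w_le i j)) _.
by move: (Pg i j); rewrite !mxE lerBrDr.
Qed.

Lemma robust_invariant_of_contractive (f : 'cV[R]_n -> 'cV[R]_n -> 'cV[R]_n)
    (lam hw : R) :
  mxle 0 g -> lam <= 1 -> lam_contractive f F g lam hw -> robust_invariant f F g hw.
Proof.
move=> g_ge0 lam_le1 contr xs ws x0_safe ws_le xs_step; elim=> // t xt_safe i j.
rewrite xs_step; apply: le_trans (contr _ _ xt_safe (ws_le t) i j) _.
by rewrite mxE ler_piMl //; move: (g_ge0 i j); rewrite mxE.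
Qed.

Lemma delta_le_worst_case (N T : nat) (hw : R) (X1 : 'M[R]_(n, T))
    (G1 : 'M[R]_(T, n)) (G2 : 'M[R]_(T, N)) (Q : 'cV[R]_n -> 'cV[R]_N)
    (l : 'cV[R]_s) (x : 'cV[R]_n) (W : 'M[R]_(n, T)) (w : 'cV[R]_n) :
  (forall i, is_max (worst_vals F g hw X1 G1 G2 Q i) (l i ord0)) ->
  safe_set F g x -> mnorm W <= T%:R * hw -> vnorm w <= hw ->
  mxle (F *m delta_term X1 G1 G2 Q x W w) l.
Proof.
move=> l_max x_safe W_le w_le i j; rewrite (ord1 j).
apply: (l_max i).2; exists x, W, w; do 3 split => //.
by rewrite -row_mul [RHS]mxE.
Qed.

End Contractivity.

Theorem corollary1 (R : realType) (n m N s T : nat)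
  (A : 'M[R]_(n, n + N)) (B : 'M[R]_(n, m))
  (S : 'cV[R]_n -> 'cV[R]_N) (As : 'M[R]_(N, n))
  (F : 'M[R]_(s, n)) (g : 'cV[R]_s) (hw lam : R)
  (ud : nat -> 'cV[R]_m) (xd wd : nat -> 'cV[R]_n) :
  (forall x, differentiable S x) ->
  S 0 = 0 ->
  (forall v, 'd S 0 v = As *m v) ->
  stabilizable (lsubmx A + rsubmx A *m As) B ->
  lipschitz_onS (fun x => S x - As *m x) (safe_set F g) ->
  polyhedral_Cset F g ->
  (forall t : nat, (t < T)%N ->
     xd t.+1 = A *m col_mx (xd t) (S (xd t)) + B *m ud t + wd t) ->
  (forall t : nat, vnorm (wd t) <= hw) ->
  let Q := fun x => S x - As *m x in
  let U0 := datamx T ud in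
  let X0 := datamx T xd in
  let X1 := datamx T (fun t => xd t.+1) in
  let V0 := col_mx X0 (datamx T (fun t => Q (xd t))) in
  row_free V0 ->
  (n + N + 1 <= T)%N ->
  0 < lam <= 1 ->
  forall (GK : 'M[R]_(T, n + N)) (Ps : 'M[R]_s) (ldw : 'cV[R]_s),
  (forall i : 'I_s,
     is_min [set r | exists G2 : 'M[R]_(T, N),
                       is_max (worst_vals F g hw X1 (lsubmx GK) G2 Q i) r] (ldw i ord0)) ->
  (forall i : 'I_s, is_max (worst_vals F g hw X1 (lsubmx GK) (rsubmx GK) Q i) (ldw i ord0)) ->
  mxle (Ps *m g) (lam *: g - ldw) ->
  Ps *m F = F *m X1 *m lsubmx GK ->
  V0 *m GK = 1%:M ->
  mxle 0 Ps ->
  let K1 := U0 *m lsubmx GK in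
  let K2 := U0 *m rsubmx GK in
  let f := fun x w => A *m col_mx x (S x) + B *m (K1 *m x + K2 *m Q x) + w in
  lam_contractive f F g lam hw /\ robust_invariant f F g hw.
Proof.
(* Differentiability, stabilizability, the Lipschitz and rank conditions and the
   minimality of ldw only ensure that a feasible GK exists. *)
move=> _ _ _ _ _ Cset dyn w_le Q U0 X0 X1 V0 _ _ /andP[_ lam_le1] GK Ps ldw _
  ldw_max Ps_g Ps_F V0_GK Ps_ge0 K1 K2 f.
rewrite -mulmxA in Ps_F; set W0 := datamx T wd.
have data : X1 = A *m col_mx X0 (datamx T (fun t => Q (xd t)) + As *m X0)
                 + B *m U0 + W0 := datamx_system As dyn.
have hw_ge0 : 0 <= hw := le_trans (vnorm_ge0 _) (w_le 0%N).
have contr : lam_contractive f F g lam hw.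
  apply: (contractive_of_linear_part (M := X1 *m lsubmx GK)
    (d := fun x w => delta_term X1 (lsubmx GK) (rsubmx GK) Q x W0 w)
    _ Ps_F Ps_ge0 Ps_g).
  - move=> x w; rewrite /f; have -> : S x = Q x + As *m x by rewrite subrK.
    exact: (closed_loop_split data x (Q x) w V0_GK).
  - move=> x w x_safe w_le_hw; apply: delta_le_worst_case => //.
    exact: mnorm_datamx_le hw_ge0 (fun t _ => w_le t).
split=> //; exact: robust_invariant_of_contractive (Cset_ge0 Cset) lam_le1 contr.
Qed.
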